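(* The attention-weighted rank fairness metric $AWRF$ does not satisfy deepness; that is, there exist a population $\mathcal D$, a candidate set $D\subseteq\mathcal D$, a ranking $r$ of $D$ and positions $i<j$ with $y(r(i))=y(r(j))$, $y(r(i+1))=y(r(j+1))$, and either ($r(i),r(j)\in G_0$ and $r(i+1),r(j+1)\in G_1$) or ($r(i),r(j)\in G_1$ and $r(i+1),r(j+1)\in G_0$), such that $|AWRF(r)-AWRF(r_{i\leftrightarrow i+1})|\le|AWRF(r)-AWRF(r_{j\leftrightarrow j+1})|$.
   Context: A population is a finite set $\mathcal{D}$ of candidates partitioned into two nonempty groups, a non-protected group $G_0$ and a protected group $G_1$; each candidate $d$ has a relevance score $y(d)\in\mathbb R$. Let $p_G=|G|/|\mathcal D|$ and $p_{\mathrm{groups}}=(p_{G_0},p_{G_1})$. For a candidate set $D\subseteq\mathcal D$ with $n=|D|$, a ranking is a bijection $r:\{1,\dots,n\}\to D$ and $r^{-1}(d)$ is the position of $d$; $r_{i\leftrightarrow j}$ is $r$ with the candidates at positions $i,j$ swapped. Position bias $b(k)=1/\log_2(k+1)$. $AWRF$: let $p_{\mathrm{Exp}}(r)=\frac{1}{\sum_{k=1}^n b(k)}\left(\sum_{d\in G_0\cap D} b(r^{-1}(d)),\ \sum_{d\in G_1\cap D} b(r^{-1}(d))\right)$, $p_{\mathrm{sum}}(r)=\frac12(p_{\mathrm{Exp}}(r)+p_{\mathrm{groups}})$, $\Delta_{KL}(p\|q)=\sum_i p_i\log_2(p_i/q_i)$ (with $0\log 0=0$), and $AWRF(r)=1-\left[\frac12\Delta_{KL}(p_{\mathrm{Exp}}(r)\|p_{\mathrm{sum}}(r))+\frac12\Delta_{KL}(p_{\mathrm{groups}}\|p_{\mathrm{sum}}(r))\right]$.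 *)

From HB Require Import structures.
From mathcomp Require Import all_boot all_order all_algebra.
From mathcomp Require Import perm Rstruct.
From Stdlib Require Rdefinitions Rpower.
Set Implicit Arguments. Unset Strict Implicit. Unset Printing Implicit Defensive.
Import Order.TTheory GRing.Theory Num.Theory.
Local Open Scope ring_scope.

Notation R := Rdefinitions.R.

Definition log2 (x : R) : R := Rpower.ln x / Rpower.ln 2.

(* position bias b(k) = 1/log2(k+1), k = 1-indexed position *)
Definition bias (k : nat) : R := 1 / log2 (k.+1)%:R.

(* A population is a finType T with a group labelling g : T -> bool
   (g d = false : d in G0 (non-protected), g d = true : d in G1 (protected)).
   Position k (0-indexed, k : 'I_n) corresponds to the paper's position k+1. *)
Definition is_ranking (T : finType) (D : {set T}) (r : 'I_#|D| -> T) : Prop :=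
  injective r /\ (forall k, r k \in D).

(* two-point distributions as pairs (mass on G0, mass on G1) *)
Definition p_groups (T : finType) (g : T -> bool) : R * R :=
  (#|[set x | ~~ g x]|%:R / #|T|%:R, #|[set x | g x]|%:R / #|T|%:R).

Definition p_Exp (T : finType) (g : T -> bool) (n : nat) (r : 'I_n -> T) : R * R :=
  let Z := \sum_(k < n) bias k.+1 in
  ((\sum_(k < n | ~~ g (r k)) bias k.+1) / Z,
   (\sum_(k < n | g (r k)) bias k.+1) / Z).

Definition p_sum (T : finType) (g : T -> bool) (n : nat) (r : 'I_n -> T) : R * R :=
  (((p_Exp g r).1 + (p_groups g).1) / 2, ((p_Exp g r).2 + (p_groups g).2) / 2).

(* summand p log2 (p/q), with the convention 0 log 0 = 0 *)
Definition kl_term (p q : R) : R := if p == 0 then 0 else p * log2 (p / q).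

Definition KL (p q : R * R) : R := kl_term p.1 q.1 + kl_term p.2 q.2.

Definition AWRF (T : finType) (g : T -> bool) (n : nat) (r : 'I_n -> T) : R :=
  1 - (KL (p_Exp g r) (p_sum g r) / 2 + KL (p_groups g) (p_sum g r) / 2).

Definition swap (T : Type) (n : nat) (r : 'I_n -> T) (i j : 'I_n) : 'I_n -> T :=
  fun k => r (tperm i j k).

(** Take four candidates in alternating groups G0, G1, G0, G1, ranked in this
    order.  Swapping the top pair gives the group pattern G1, G0, G0, G1 and
    swapping the bottom pair gives G0, G1, G1, G0: each pattern is the other
    with the group labels exchanged.  The population is balanced, so AWRF is
    invariant under exchanging the labels, and both swaps change AWRF by
    exactly the same amount; a deep metric would have to penalise the swap at
    the top strictly more. *)
From HB Require Import structures.
From mathcomp Require Import all_boot all_order all_algebra perm.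
From mathcomp Require Import Rstruct.

Set Implicit Arguments.
Unset Strict Implicit.
Unset Printing Implicit Defensive.
Import Order.TTheory GRing.Theory Num.Theory.
Local Open Scope ring_scope.

Definition flip (p : R * R) : R * R := (p.2, p.1).

Lemma KL_flip (p q : R * R) : KL (flip p) (flip q) = KL p q.
Proof. exact: addrC. Qed.

Section ComplementaryLabels.

Variables (T : finType) (g : T -> bool).

Lemma p_groups_flip :
  #|[set x | ~~ g x]| = #|[set x | g x]| -> p_groups g = flip (p_groups g).
Proof. by rewrite /p_groups /= => ->. Qed.

Variables (n : nat) (r r' : 'I_n -> T).
Hypothesis labels_compl : forall k, g (r' k) = ~~ g (r k).

Lemma p_Exp_compl : p_Exp g r' = flip (p_Exp g r).
Proof.
rewrite /p_Exp /flip /=.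
by congr (_ / _, _ / _); apply: eq_bigl => k; rewrite labels_compl ?negbK.
Qed.

Lemma AWRF_compl :
  #|[set x | ~~ g x]| = #|[set x | g x]| -> AWRF g r' = AWRF g r.
Proof.
move=> /p_groups_flip balanced.
have p_sum_compl : p_sum g r' = flip (p_sum g r).
  by rewrite /p_sum p_Exp_compl {1 2}balanced.
by rewrite /AWRF p_sum_compl p_Exp_compl {1}balanced !KL_flip.
Qed.

End ComplementaryLabels.

Lemma odd_rev_ord n (x : 'I_n) : ~~ odd n -> odd (rev_ord x) = ~~ odd x.
Proof. by move=> /negbTE n_even; rewrite /= oddB // n_even. Qed.

Lemma card_even_odd_ord n : ~~ odd n ->
  #|[set x : 'I_n | ~~ odd x]| = #|[set x : 'I_n | odd x]|.
Proof.
move=> n_even; rewrite -(card_preimset _ (@rev_ord_inj n)).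
by apply: eq_card => x; rewrite !inE odd_rev_ord ?negbK.
Qed.

Lemma card_setT_ord n : #|[set: 'I_n]| = n.
Proof. by rewrite cardsT card_ord. Qed.

Definition ord_ranking {n} : 'I_#|[set: 'I_n]| -> 'I_n :=
  cast_ord (card_setT_ord n).

Definition ord_position {n} (k : 'I_n) : 'I_#|[set: 'I_n]| :=
  cast_ord (esym (card_setT_ord n)) k.

Lemma ord_ranking_is_ranking n : is_ranking (@ord_ranking n).
Proof. by split=> [|k]; [exact: cast_ord_inj | rewrite in_setT]. Qed.

Lemma odd_swap_bottom_top (k : 'I_#|[set: 'I_4]|) :
  odd (swap ord_ranking (ord_position 2) (ord_position 3) k)
  = ~~ odd (swap ord_ranking (ord_position 0) (ord_position 1) k).
Proof.
rewrite /swap !permE.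
case: k => [[|[|[|[|m]]]] m_lt] //=.
by rewrite card_setT_ord in m_lt.
Qed.

Theorem theorem9 :
  exists (T : finType) (g : T -> bool) (y : T -> R) (D : {set T})
         (r : 'I_#|D| -> T) (i i1 j j1 : 'I_#|D|),
    (exists x, ~~ g x) /\ (exists x, g x) /\
    is_ranking r /\
    (i < j)%N /\ val i1 = (val i).+1 /\ val j1 = (val j).+1 /\
    y (r i) = y (r j) /\ y (r i1) = y (r j1) /\
    ((~~ g (r i) /\ ~~ g (r j) /\ g (r i1) /\ g (r j1)) \/
     (g (r i) /\ g (r j) /\ ~~ g (r i1) /\ ~~ g (r j1))) /\
    `|AWRF g r - AWRF g (swap r i i1)| <= `|AWRF g r - AWRF g (swap r j j1)|.
Proof.
exists 'I_4, (fun x : 'I_4 => odd x), (fun=> 0), [set: 'I_4], ord_ranking,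
  (ord_position 0), (ord_position 1), (ord_position 2), (ord_position 3).
split; first by exists 0.
split; first by exists 1.
split; first exact: ord_ranking_is_ranking.
do 5 (split; first by []).
split; first by left.
rewrite (AWRF_compl (g := fun x : 'I_4 => odd x) odd_swap_bottom_top) ?lexx //.
exact: card_even_odd_ord.
Qed.
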